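(* There does not exist an equal norm tight integer frame with five elements in $\mathcal{H}_3$.
   Context: $\mathcal{H}_M$ is the real $M$-dimensional Hilbert space, identified with $\mathbb{R}^M$ via a fixed orthonormal basis. An equal norm tight integer frame (ENTIF) with $N$ elements in $\mathcal{H}_M$ is an $M\times N$ integer matrix $A$ of rank $M$ with $AA^T=\lambda I_M$ for some $\lambda>0$ and all columns of the same Euclidean norm. *)

From mathcomp Require Import all_boot all_order all_algebra.
Set Implicit Arguments. Unset Strict Implicit. Unset Printing Implicit Defensive.
Import Order.TTheory GRing.Theory Num.Theory.
Local Open Scope ring_scope.

(* Since A A^T has integer entries, lambda is necessarily a
   positive integer; we take lambda : int. *)
Definition ENTIF (M N : nat) (A : 'M[int]_(M, N)) : Prop :=
  \rank (map_mx (fun z : int => z%:~R : rat) A) = M /\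
  (exists lambda : int, 0 < lambda /\ A *m A^T = lambda%:M) /\
  (forall j k : 'I_N, \sum_(i < M) A i j ^+ 2 = \sum_(i < M) A i k ^+ 2).

From mathcomp Require Import all_boot all_order all_algebra.
From mathcomp Require Import zify ring.

(* Since x^2 = x mod 2 (mod 4), the row norm lam and the common column norm c are
   congruent mod 4 to the number of odd entries of each row, resp. column.  A
   column has only three entries, so each contains exactly c mod 4 odd entries,
   and counting them row by row (each row count is at most 5 and = lam mod 4)
   leaves 0 or 3.  With 3, all entries are odd and two rows have an odd inner
   product; so all entries are even, and halving the matrix preserves tightness
   and equal column norms.  By infinite descent the matrix is zero, which is
   incompatible with lam > 0. *)

Set Implicit Arguments.
Unset Strict Implicit.
Unset Printing Implicit Defensive.

Import Order.TTheory GRing.Theory Num.Theory.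
Local Open Scope ring_scope.

Lemma modz_sum (I : Type) (r : seq I) (P : pred I) (F G : I -> int) (d : int) :
  (forall i, P i -> F i = G i %[mod d])%Z ->
  (\sum_(i <- r | P i) F i = \sum_(i <- r | P i) G i %[mod d])%Z.
Proof.
move=> eqFG; elim/big_rec2: _ => // i x y Pi eqxy.
by rewrite -modzDm eqFG // eqxy modzDm.
Qed.

Lemma sqrz_mod4 (x : int) : (x ^+ 2 = (x %% 2)%Z %[mod 4])%Z.
Proof.
rewrite {1}(divz_eq x 2).
have -> : ((x %/ 2)%Z * 2 + (x %% 2)%Z) ^+ 2
        = ((x %/ 2)%Z ^+ 2 + (x %/ 2)%Z * (x %% 2)%Z) * 4 + (x %% 2)%Z ^+ 2 by ring.
by rewrite modzMDl; have [-> | ->] : (x %% 2)%Z = 0 \/ (x %% 2)%Z = 1 by lia.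
Qed.

Lemma sumr_const_ord (N : nat) : \sum_(j < N) (1 : int) = N%:R.
Proof. by rewrite sumr_const card_ord. Qed.

Lemma sum_modz2_bounds (N : nat) (x : 'I_N -> int) :
  0 <= \sum_(j < N) (x j %% 2)%Z <= N%:R.
Proof.
apply/andP; split; first by apply: sumr_ge0 => j _; lia.
by rewrite -[leRHS]sumr_const_ord; apply: ler_sum => j _; lia.
Qed.

Lemma sum_modz2_eq0 (N : nat) (x : 'I_N -> int) :
  \sum_(j < N) (x j %% 2)%Z = 0 -> forall j, (x j %% 2)%Z = 0.
Proof.
move=> sum0 j; have x_ge0 k : xpredT k -> 0 <= (x k %% 2)%Z by lia.
exact: (psumr_eq0P x_ge0 sum0).
Qed.

Lemma sum_modz2_eqN (N : nat) (x : 'I_N -> int) :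
  \sum_(j < N) (x j %% 2)%Z = N%:R -> forall j, (x j %% 2)%Z = 1.
Proof.
move=> sumN j; suff: 1 - (x j %% 2)%Z = 0 by lia.
have y_ge0 k : xpredT k -> 0 <= 1 - (x k %% 2)%Z by lia.
by apply: (psumr_eq0P y_ge0); rewrite // big_split /= sumrN sumN sumr_const_ord subrr.
Qed.

Lemma sum_mul_modz2 (N : nat) (x y : 'I_N -> int) :
  (forall j, (x j %% 2)%Z = 1) -> (forall j, (y j %% 2)%Z = 1) ->
  (\sum_(j < N) x j * y j = N%:R %[mod 2])%Z.
Proof.
move=> xodd yodd; rewrite -[N%:R]sumr_const_ord.
by apply: modz_sum => j _; rewrite -modzMm xodd yodd.
Qed.

Section IntegerFrames.
Variables M N : nat.
Implicit Types A : 'M[int]_(M, N).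

Definition tight_equal_norm A : Prop :=
  (exists lam : int, A *m A^T = lam%:M) /\
  (forall j k : 'I_N, \sum_(i < M) A i j ^+ 2 = \sum_(i < M) A i k ^+ 2).

Definition halvemx A : 'M[int]_(M, N) := map_mx (fun x => (x %/ 2)%Z) A.

Lemma mulmx_trE A i k : (A *m A^T) i k = \sum_j A i j * A k j.
Proof. by rewrite mxE; apply: eq_bigr => j _; rewrite mxE. Qed.

Lemma gram_scalarP A lam :
  A *m A^T = lam%:M <-> forall i k, \sum_j A i j * A k j = lam *+ (i == k).
Proof.
split=> [gramA i k | gramA]; last apply/matrixP => i k.
  by rewrite -mulmx_trE gramA mxE.
by rewrite mulmx_trE gramA mxE.
Qed.

Lemma halvemxK A :
  (forall i j, (A i j %% 2)%Z = 0) -> forall i j, A i j = 2 * halvemx A i j.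
Proof. by move=> evenA i j; rewrite mxE; have := evenA i j; lia. Qed.

Lemma tight_halvemx A :
  (forall i j, (A i j %% 2)%Z = 0) -> tight_equal_norm A ->
  tight_equal_norm (halvemx A).
Proof.
move=> /halvemxK AE [[lam /gram_scalarP gramA] colA].
set B := halvemx A.
split.
- exists (lam %/ 4)%Z; apply/gram_scalarP => i k.
  have gram4 : \sum_j A i j * A k j = 4 * \sum_j B i j * B k j.
    by rewrite mulr_sumr; apply: eq_bigr => j _; rewrite !AE; ring.
  by move: (gramA i k); rewrite gram4; case: (i == k); rewrite ?mulr1n ?mulr0n; lia.
- have col4 j : \sum_i A i j ^+ 2 = 4 * \sum_i B i j ^+ 2.
    by rewrite mulr_sumr; apply: eq_bigr => i _; rewrite AE; ring.
  by move=> j k; apply: (mulfI (isT : (4 : int) != 0)); rewrite -!col4.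
Qed.

Lemma halvemx_closed_eq0 (P : 'M[int]_(M, N) -> Prop) :
  (forall A, P A -> forall i j, (A i j %% 2)%Z = 0) ->
  (forall A, P A -> P (halvemx A)) ->
  forall A, P A -> A = 0.
Proof.
move=> evenP halveP.
have dvd_pow2 n A : P A -> forall i j, (2 ^ n %| `|A i j|)%N.
  elim: n A => [|n IHn] A PA i j; first exact: dvd1n.
  by rewrite (halvemxK (evenP A PA)) abszM expnS dvdn_pmul2l //; apply: IHn; exact: halveP.
move=> A PA; apply/matrixP => i j; rewrite mxE; apply/eqP; rewrite -absz_eq0.
apply: contraT; rewrite -lt0n => Aij_gt0.
have := dvdn_leq Aij_gt0 (dvd_pow2 `|A i j|%N A PA i j).
by rewrite leqNgt ltn_expl.
Qed.

End IntegerFrames.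

Lemma odd_count_3x5 (lam m : int) (n : 'I_3 -> int) :
  (forall i, 0 <= n i <= 5) -> (forall i, (lam = n i %[mod 4])%Z) ->
  \sum_i n i = m *+ 5 -> 0 <= m < 4 -> m = 0 \/ m = 3.
Proof.
move=> n_bounds n_mod4; rewrite !big_ord_recl big_ord0.
have := n_bounds ord0; have := n_bounds (lift ord0 ord0).
have := n_bounds (lift ord0 (lift ord0 ord0)).
have := n_mod4 ord0; have := n_mod4 (lift ord0 ord0).
have := n_mod4 (lift ord0 (lift ord0 ord0)).
lia.
Qed.

Lemma tight_3x5_parity (A : 'M[int]_(3, 5)) : tight_equal_norm A ->
  (forall i j, (A i j %% 2)%Z = 0) \/ (forall i j, (A i j %% 2)%Z = 1).
Proof.
case=> [[lam /gram_scalarP gramA] colA].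
pose c := \sum_i A i 0 ^+ 2.
have row_mod4 i : (lam = \sum_j (A i j %% 2)%Z %[mod 4])%Z.
  have := gramA i i; rewrite eqxx mulr1n => <-.
  by apply: modz_sum => j _; rewrite -expr2 sqrz_mod4.
have col_oddE j : \sum_i (A i j %% 2)%Z = (c %% 4)%Z.
  have : (c = \sum_i (A i j %% 2)%Z %[mod 4])%Z.
    by rewrite /c (colA 0 j); apply: modz_sum => i _; exact: sqrz_mod4.
  have /andP[col_ge0 col_le3] := sum_modz2_bounds (A^~ j).
  by move=> ->; rewrite modz_small // col_ge0 (le_lt_trans col_le3).
have odd_total : \sum_i \sum_j (A i j %% 2)%Z = (c %% 4)%Z *+ 5.
  by rewrite exchange_big (eq_bigr _ (fun j _ => col_oddE j)) sumr_const card_ord.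
have [c0 | c3] : (c %% 4)%Z = 0 \/ (c %% 4)%Z = 3.
  apply: (odd_count_3x5 (fun i => sum_modz2_bounds (A i)) row_mod4 odd_total).
  lia.
- by left => i j; apply: (sum_modz2_eq0 (x := A^~ j)); rewrite col_oddE.
- by right => i j; apply: (sum_modz2_eqN (x := A^~ j)); rewrite col_oddE.
Qed.

Lemma tight_3x5_even (A : 'M[int]_(3, 5)) :
  tight_equal_norm A -> forall i j, (A i j %% 2)%Z = 0.
Proof.
move=> tightA; have [// | oddA] := tight_3x5_parity tightA.
case: tightA => [[lam /gram_scalarP gramA] _].
by have := sum_mul_modz2 (oddA 0) (oddA 1); rewrite gramA.
Qed.

Lemma tight_3x5_eq0 (A : 'M[int]_(3, 5)) : tight_equal_norm A -> A = 0.
Proof.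
apply: halvemx_closed_eq0 => [B | B tightB]; first exact: tight_3x5_even.
exact: tight_halvemx (tight_3x5_even tightB) tightB.
Qed.

Theorem corollary4p13 : ~ exists A : 'M[int]_(3, 5), ENTIF A.
Proof.
case=> A [_ [[lam [lam_gt0 gramA]] colA]].
have A0 : A = 0 by apply: tight_3x5_eq0; split; [exists lam | exact: colA].
move: gramA; rewrite A0 mul0mx => /matrixP/(_ 0 0).
by rewrite !mxE eqxx mulr1n => lam0; rewrite -lam0 ltxx in lam_gt0.
Qed.
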